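(* Let $k,l,m,n\in\mathbb{N}_0$, let $I\subset\mathbb{R}$ be an interval, and suppose that $F$ is $k$-compatible with $\Pi_n$ of degree $l$ on $I$. Let \[ \mathcal{F}_{m,n}=\{p(x)+F(x)q(x):\ p\in\Pi_m,\ q\in\Pi_n\}, \] considered as functions on $I$. If $k>m$, then every nonzero $f\in\mathcal{F}_{m,n}$ has at most $k+l$ distinct zeros in $I$. If, in addition, $l<n-(k-m)+2$, then every nonzero $f\in\mathcal{F}_{m,n}$ has fewer than $m+n+2$ distinct zeros in $I$.
   Context: $\Pi_n$ denotes the space of real polynomials of degree at most $n$. For $k,n,l\in\mathbb{N}_0$ and an interval $I$, a function $F:I\to\mathbb{R}$ is called $k$-compatible with $\Pi_n$ of degree $l$ on $I$ if: (1) $F\in C^{k+1}(I)$; (2) there is a function $\tilde F:I\to\mathbb{R}$ (depending on $k$ and $n$ but not on $q$) which is monotone on $I$ and satisfies $\tilde F(x)\ne0$ for all $x\in I$, such that for every nonzero $q\in\Pi_n$ there is a function $\tilde q:I\to\mathbb{R}$ with $\frac{d^k}{dx^k}(Fq)=\tilde F\,\tilde q$ on $I$ and $\tilde q$ has at most $l$ distinct zeros in $I$. *)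

From Stdlib Require Import Reals Lra Lia ZArith List.
From Coquelicot Require Import Coquelicot.
Open Scope R_scope.

Definition is_interval (I : R -> Prop) : Prop :=
  forall x y z, I x -> I z -> x <= y -> y <= z -> I y.

Definition poly_eval (c : nat -> R) (n : nat) (x : R) : R :=
  sum_f_R0 (fun i => c i * x ^ i) n.

Definition poly_nonzero (c : nat -> R) (n : nat) : Prop :=
  exists i, (i <= n)%nat /\ c i <> 0.

(* f' is the derivative of f on I, taken within I
   (one-sided at endpoints belonging to I). *)
Definition is_deriv_on (I : R -> Prop) (f f' : R -> R) : Prop :=
  forall x, I x ->
    filterlim (fun y => (f y - f x) / (y - x))
              (within (fun y => I y /\ y <> x) (locally x))
              (locally (f' x)).

Fixpoint is_deriv_n_on (I : R -> Prop) (k : nat) (f g : R -> R) : Prop :=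
  match k with
  | O => forall x, I x -> f x = g x
  | S k' => exists h, is_deriv_on I f h /\ is_deriv_n_on I k' h g
  end.

Definition continuous_on_I (I : R -> Prop) (g : R -> R) : Prop :=
  forall x, I x -> filterlim g (within I (locally x)) (locally (g x)).

Definition Cr_on (I : R -> Prop) (r : nat) (F : R -> R) : Prop :=
  exists g, is_deriv_n_on I r F g /\ continuous_on_I I g.

Definition monotone_on (I : R -> Prop) (g : R -> R) : Prop :=
  (forall x y, I x -> I y -> x <= y -> g x <= g y) \/
  (forall x y, I x -> I y -> x <= y -> g y <= g x).

Definition at_most_zeros (I : R -> Prop) (g : R -> R) (N : nat) : Prop :=
  forall s : list R, NoDup s -> (forall x, In x s -> I x /\ g x = 0) ->
    (length s <= N)%nat.

Definition k_compatible (k n l : nat) (I : R -> Prop) (F : R -> R) : Prop :=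
  Cr_on I (S k) F /\
  exists Ft : R -> R,
    monotone_on I Ft /\ (forall x, I x -> Ft x <> 0) /\
    forall c : nat -> R, poly_nonzero c n ->
      exists qt : R -> R,
        is_deriv_n_on I k (fun x => F x * poly_eval c n x)
                          (fun x => Ft x * qt x) /\
        at_most_zeros I qt l.

(* Write f = p + F q with p of degree at most m < k.  Then the k-th
   derivative of f is the k-th derivative of F q, which by k-compatibility
   equals Ft qt with Ft nonvanishing on I and qt having at most l zeros;
   hence f^(k) has at most l zeros on I.  By Rolle's theorem a function has
   at most one zero more than its derivative on an interval, so f has at
   most k + l zeros.  If q = 0 then f = p is a nonzero polynomial of degree
   at most m < k, with at most m zeros.  The second bound follows since the
   hypothesis l < n - (k - m) + 2 gives k + l <= m + n + 1. *)

From Stdlib Require Import Reals ZArith List.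
From Coquelicot Require Import Coquelicot.
From Stdlib Require Import Lra Lia Classical.
Open Scope R_scope.

Lemma is_deriv_on_eps I f h x : is_deriv_on I f h -> I x ->
  forall eps, 0 < eps -> exists d, 0 < d /\
    forall y, I y -> y <> x -> Rabs (y - x) < d ->
      Rabs ((f y - f x) / (y - x) - h x) < eps.
Proof.
  intros H Ix eps He.
  assert (Hball : locally (h x) (fun r => Rabs (r - h x) < eps)).
  { exists (mkposreal eps He). intros r Hr. exact Hr. }
  destruct (H x Ix _ Hball) as [d Hd].
  exists d. split; [apply cond_pos |].
  intros y Iy yx Hy. now apply (Hd y).
Qed.

Lemma is_deriv_on_of_eps I f h :
  (forall x, I x -> forall eps, 0 < eps -> exists d, 0 < d /\
     forall y, I y -> y <> x -> Rabs (y - x) < d ->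
       Rabs ((f y - f x) / (y - x) - h x) < eps) ->
  is_deriv_on I f h.
Proof.
  intros H x Ix P [eps HP].
  destruct (H x Ix eps (cond_pos eps)) as [d [Hd0 Hd]].
  exists (mkposreal d Hd0). intros y Hy [Iy yx]. apply HP. now apply Hd.
Qed.

Lemma is_deriv_on_continuous I f h x : is_deriv_on I f h -> I x ->
  forall eps, 0 < eps -> exists d, 0 < d /\
    forall y, I y -> Rabs (y - x) < d -> Rabs (f y - f x) < eps.
Proof.
  intros H Ix eps He.
  destruct (is_deriv_on_eps I f h x H Ix 1 Rlt_0_1) as [d1 [Hd1 Hd]].
  set (K := Rabs (h x) + 1).
  assert (HK : 0 < K) by (unfold K; pose proof (Rabs_pos (h x)); lra).
  exists (Rmin d1 (eps / K)). split.
  { apply Rmin_glb_lt; [lra | now apply Rdiv_lt_0_compat]. }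
  intros y Iy Hy.
  destruct (Req_dec y x) as [-> | yx].
  { now rewrite Rminus_diag, Rabs_R0. }
  set (q := (f y - f x) / (y - x)).
  assert (Hfq : f y - f x = q * (y - x)) by (unfold q; field; lra).
  assert (Hq : Rabs q < K).
  { specialize (Hd y Iy yx (Rlt_le_trans _ _ _ Hy (Rmin_l _ _))).
    fold q in Hd.
    pose proof (Rabs_triang (q - h x) (h x)) as T.
    replace (q - h x + h x) with q in T by ring. unfold K. lra. }
  assert (Hyx : Rabs (y - x) * K < eps).
  { apply (Rmult_lt_reg_r (/ K)); [now apply Rinv_0_lt_compat |].
    replace (Rabs (y - x) * K * / K) with (Rabs (y - x)) by (field; lra).
    exact (Rlt_le_trans _ _ _ Hy (Rmin_r _ _)). }
  rewrite Hfq, Rabs_mult.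
  pose proof (Rabs_pos q). pose proof (Rabs_pos (y - x)). nra.
Qed.

Lemma is_deriv_on_plus I f1 g1 f2 g2 :
  is_deriv_on I f1 g1 -> is_deriv_on I f2 g2 ->
  is_deriv_on I (fun x => f1 x + f2 x) (fun x => g1 x + g2 x).
Proof.
  intros H1 H2. apply is_deriv_on_of_eps. intros x Ix eps He.
  destruct (is_deriv_on_eps I f1 g1 x H1 Ix (eps / 2)) as [d1 [P1 D1]]; [lra |].
  destruct (is_deriv_on_eps I f2 g2 x H2 Ix (eps / 2)) as [d2 [P2 D2]]; [lra |].
  exists (Rmin d1 d2). split; [now apply Rmin_glb_lt |].
  intros y Iy yx Hy.
  specialize (D1 y Iy yx (Rlt_le_trans _ _ _ Hy (Rmin_l _ _))).
  specialize (D2 y Iy yx (Rlt_le_trans _ _ _ Hy (Rmin_r _ _))).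
  replace ((f1 y + f2 y - (f1 x + f2 x)) / (y - x) - (g1 x + g2 x)) with
    (((f1 y - f1 x) / (y - x) - g1 x) + ((f2 y - f2 x) / (y - x) - g2 x))
    by (field; lra).
  pose proof (Rabs_triang ((f1 y - f1 x) / (y - x) - g1 x)
                          ((f2 y - f2 x) / (y - x) - g2 x)).
  lra.
Qed.

Lemma is_deriv_n_on_plus I k : forall f1 g1 f2 g2,
  is_deriv_n_on I k f1 g1 -> is_deriv_n_on I k f2 g2 ->
  is_deriv_n_on I k (fun x => f1 x + f2 x) (fun x => g1 x + g2 x).
Proof.
  induction k as [| k IH]; intros f1 g1 f2 g2 H1 H2; simpl in *.
  - intros x Ix. now rewrite H1, H2.
  - destruct H1 as [h1 [A1 B1]], H2 as [h2 [A2 B2]].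
    exists (fun x => h1 x + h2 x). split.
    + now apply is_deriv_on_plus.
    + now apply IH.
Qed.

Lemma is_deriv_on_of_derive I f f' :
  (forall x, is_derive f x (f' x)) -> is_deriv_on I f f'.
Proof.
  intros H. apply is_deriv_on_of_eps. intros x Ix eps He.
  destruct (proj1 (is_derive_Reals f x (f' x)) (H x) eps He) as [d Hd].
  exists d. split; [apply cond_pos |].
  intros y Iy yx Hy. specialize (Hd (y - x) ltac:(lra) Hy).
  now replace (x + (y - x)) with y in Hd by ring.
Qed.

(* Projection of R onto [a, b]; it turns a function on I into one on R that
   agrees with it on [a, b], so that Rolle's theorem of the library applies. *)
Definition clamp (a b y : R) : R := Rmax a (Rmin b y).

Lemma clamp_between a b y : a <= b -> a <= clamp a b y <= b.
Proof.
  intros. unfold clamp, Rmax, Rmin.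
  destruct (Rle_dec b y); destruct (Rle_dec a _); lra.
Qed.

Lemma clamp_id a b y : a <= y <= b -> clamp a b y = y.
Proof.
  intros. unfold clamp, Rmax, Rmin.
  destruct (Rle_dec b y); destruct (Rle_dec a _); lra.
Qed.

Lemma clamp_dist a b y x : a <= x <= b ->
  Rabs (clamp a b y - x) <= Rabs (y - x).
Proof.
  intros. unfold clamp, Rmax, Rmin.
  destruct (Rle_dec b y); destruct (Rle_dec a _);
    unfold Rabs; repeat destruct Rcase_abs; lra.
Qed.

Lemma rolle_on I f h a b : is_interval I -> is_deriv_on I f h ->
  I a -> I b -> a < b -> f a = 0 -> f b = 0 ->
  exists c, a < c < b /\ h c = 0.
Proof.
  intros HI Hd Ia Ib ab fa fb.
  set (g := fun y => f (clamp a b y)).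
  assert (I_ab : forall y, a <= y <= b -> I y)
    by (intros y Hy; apply (HI a y b); tauto).
  assert (Hder : forall x, a < x < b -> derivable_pt_lim g x (h x)).
  { intros x Hx eps He.
    destruct (is_deriv_on_eps I f h x Hd (I_ab x ltac:(lra)) eps He)
      as [d [Hd0 Hdd]].
    assert (Hpos : 0 < Rmin d (Rmin (x - a) (b - x)))
      by (repeat apply Rmin_glb_lt; lra).
    exists (mkposreal _ Hpos). intros dx Hdx Hlt. simpl in Hlt.
    pose proof (Rmin_l d (Rmin (x - a) (b - x))).
    pose proof (Rmin_r d (Rmin (x - a) (b - x))).
    pose proof (Rmin_l (x - a) (b - x)). pose proof (Rmin_r (x - a) (b - x)).
    assert (Hr : a <= x + dx <= b)
      by (revert Hlt; unfold Rabs; destruct Rcase_abs; intros; lra).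
    unfold g. rewrite (clamp_id a b (x + dx) Hr), (clamp_id a b x) by lra.
    specialize (Hdd (x + dx) (I_ab _ Hr) ltac:(lra)).
    replace (x + dx - x) with dx in Hdd by ring. apply Hdd; lra. }
  assert (Hcont : forall x, a <= x <= b -> continuity_pt g x).
  { intros x Hx eps He.
    destruct (is_deriv_on_continuous I f h x Hd (I_ab x Hx) eps He)
      as [d [Hd0 Hdd]].
    exists d. split; [exact Hd0 |]. intros y [_ Hy].
    simpl in *. unfold R_dist in *. unfold g. rewrite (clamp_id a b x Hx).
    apply Hdd.
    - apply I_ab, clamp_between; lra.
    - eapply Rle_lt_trans; [apply clamp_dist; exact Hx | exact Hy]. }
  set (pr := fun x (P : a < x < b) =>
         exist (fun l => derivable_pt_abs g x l) (h x) (Hder x P)).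
  destruct (Rolle g a b pr Hcont ab) as [c [P Hc]].
  { unfold g. rewrite !clamp_id by lra. congruence. }
  exists c. now split.
Qed.

Lemma list_max_exists (s : list R) : s <> nil ->
  exists M, In M s /\ forall y, In y s -> y <= M.
Proof.
  induction s as [| x s IH]; intros H; [congruence |].
  destruct s as [| z s'].
  - exists x. split; [now left |]. intros y [<- | []]; lra.
  - destruct IH as [M [HM HMmax]]; [discriminate |].
    destruct (Rle_dec x M).
    + exists M. split; [now right |]. intros y [<- | Hy]; auto.
    + exists x. split; [now left |]. intros y [<- | Hy]; [lra |].
      specialize (HMmax y Hy). lra.
Qed.

(* The extra invariant (every zero of h lies below some zero of f) lets the
   induction add the zero found between the two largest zeros of f. *)
Lemma rolle_zeros_list I f h : is_interval I -> is_deriv_on I f h ->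
  forall N s, NoDup s -> length s = S N ->
    (forall x, In x s -> I x /\ f x = 0) ->
    exists t, NoDup t /\ length t = N /\
      (forall x, In x t -> I x /\ h x = 0) /\
      (forall c, In c t -> exists y, In y s /\ c < y).
Proof.
  intros HI Hd N. induction N as [| N IH]; intros s nd len zs.
  { exists nil. repeat split; try constructor; simpl; tauto. }
  destruct (list_max_exists s) as [M [HM HMmax]]; [intros ->; discriminate |].
  destruct (in_split M s HM) as [l1 [l2 ->]].
  set (s' := l1 ++ l2).
  assert (sub : forall y, In y s' -> In y (l1 ++ M :: l2)).
  { intros y Hy. apply in_or_app. apply in_app_or in Hy. simpl. tauto. }
  assert (len' : length s' = S N)
    by (unfold s'; rewrite length_app in *; simpl in len; lia).
  destruct (IH s' (NoDup_remove_1 _ _ _ nd) len' (fun x Hx => zs x (sub x Hx)))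
    as [t [ndt [lent [zt below]]]].
  destruct (list_max_exists s') as [M' [HM' HM'max]]; [intros E; now rewrite E in len' |].
  assert (M'M : M' < M).
  { pose proof (HMmax M' (sub _ HM')). destruct (Req_dec M' M) as [-> |]; [| lra].
    exfalso. exact (NoDup_remove_2 _ _ _ nd HM'). }
  destruct (zs M HM) as [IM fM], (zs M' (sub _ HM')) as [IM' fM'].
  destruct (rolle_on I f h M' M HI Hd IM' IM M'M fM' fM) as [c [Hc hc]].
  exists (c :: t). split; [| split; [| split]].
  - constructor; [| exact ndt]. intros Hct.
    destruct (below c Hct) as [y [Hy cy]]. specialize (HM'max y Hy). lra.
  - simpl. lia.
  - intros x [<- | Hx]; [| now apply zt]. split; [| exact hc].
    apply (HI M' c M); auto; lra.
  - intros c0 [<- | Hc0]; [exists M; split; [exact HM | lra] |].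
    destruct (below c0 Hc0) as [y [Hy cy]]. exists y. auto.
Qed.

Lemma at_most_zeros_of_deriv I f h N : is_interval I -> is_deriv_on I f h ->
  at_most_zeros I h N -> at_most_zeros I f (S N).
Proof.
  intros HI Hd Hh s nd zs. destruct (length s) as [| N'] eqn:E; [lia |].
  destruct (rolle_zeros_list I f h HI Hd N' s nd E zs) as [t [ndt [lent [zt _]]]].
  specialize (Hh t ndt zt). lia.
Qed.

Lemma at_most_zeros_of_deriv_n I k : is_interval I -> forall f g N,
  is_deriv_n_on I k f g -> at_most_zeros I g N -> at_most_zeros I f (k + N).
Proof.
  intros HI. induction k as [| k IH]; intros f g N Hd Hg.
  - intros s nd zs. apply Hg; [exact nd |]. intros x Hx.
    destruct (zs x Hx) as [Ix fx]. split; [exact Ix |]. now rewrite <- Hd.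
  - destruct Hd as [h [Hh Hk]]. apply (at_most_zeros_of_deriv I f h); auto.
    eapply IH; eauto.
Qed.

Lemma at_most_zeros_ext I f g N : (forall x, I x -> f x = g x) ->
  at_most_zeros I g N -> at_most_zeros I f N.
Proof.
  intros E H s nd zs. apply H; [exact nd |]. intros x Hx.
  destruct (zs x Hx) as [Ix fx]. split; [exact Ix |]. now rewrite <- E.
Qed.

Lemma at_most_zeros_weaken I f N N' : (N <= N')%nat ->
  at_most_zeros I f N -> at_most_zeros I f N'.
Proof. intros L H s nd zs. specialize (H s nd zs). lia. Qed.

Lemma at_most_zeros_mult_nonvanishing I u q N :
  (forall x, I x -> u x <> 0) -> at_most_zeros I q N ->
  at_most_zeros I (fun x => u x * q x) N.
Proof.
  intros Hu Hq s nd zs. apply Hq; [exact nd |]. intros x Hx.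
  destruct (zs x Hx) as [Ix E]. split; [exact Ix |].
  destruct (Rmult_integral _ _ E) as [E' | E']; [now destruct (Hu x Ix) | exact E'].
Qed.

Definition deriv_coef (a : nat -> R) (i : nat) : R := INR (S i) * a (S i).

Lemma poly_eval_is_derive m a x :
  is_derive (poly_eval a (S m)) x (poly_eval (deriv_coef a) m x).
Proof.
  revert x. induction m as [| m IH]; intros x.
  - unfold poly_eval, deriv_coef. simpl. auto_derive; [trivial | ring].
  - change (poly_eval a (S (S m))) with
      (fun y => poly_eval a (S m) y + a (S (S m)) * y ^ S (S m)).
    change (poly_eval (deriv_coef a) (S m) x) with
      (poly_eval (deriv_coef a) m x + deriv_coef a (S m) * x ^ S m).
    apply (is_derive_plus (V := R_NormedModule)); [apply IH |].
    unfold deriv_coef. auto_derive; [trivial |]. simpl. ring.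
Qed.

Lemma poly_eval_deriv_n_zero I m : forall a k, (m < k)%nat ->
  is_deriv_n_on I k (poly_eval a m) (fun _ => 0).
Proof.
  assert (zero_chain : forall k, is_deriv_n_on I k (fun _ => 0) (fun _ => 0)).
  { induction k as [| k IHk]; simpl; [auto |].
    exists (fun _ => 0). split; [| exact IHk].
    apply is_deriv_on_of_derive. intros x. apply is_derive_Reals, derivable_pt_lim_const. }
  induction m as [| m IH]; intros a k Hk; destruct k as [| k]; try lia; simpl.
  - exists (fun _ => 0). split; [| apply zero_chain].
    apply is_deriv_on_of_derive. intros x. unfold poly_eval. simpl.
    apply is_derive_Reals, derivable_pt_lim_const.
  - exists (poly_eval (deriv_coef a) m). split.
    + apply is_deriv_on_of_derive. intros x. apply poly_eval_is_derive.
    + apply IH. lia.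
Qed.

Lemma poly_eval_not_nonzero c n x : ~ poly_nonzero c n -> poly_eval c n x = 0.
Proof.
  intros Hc. unfold poly_eval. induction n as [| n IH]; simpl.
  - destruct (Req_dec (c 0%nat) 0) as [-> | H]; [ring |].
    exfalso. apply Hc. exists 0%nat. split; [lia | exact H].
  - rewrite IH.
    + destruct (Req_dec (c (S n)) 0) as [-> | H]; [ring |].
      exfalso. apply Hc. exists (S n). split; [lia | exact H].
    + intros [i [Hi Ci]]. apply Hc. exists i. split; [lia | exact Ci].
Qed.

Lemma poly_eval_at_most_zeros I m : is_interval I -> forall a,
  poly_nonzero a m -> at_most_zeros I (poly_eval a m) m.
Proof.
  intros HI. induction m as [| m IH]; intros a [i [Hi Ha]].
  - assert (i = 0%nat) by lia. subst i.
    intros [| x s] nd zs; [simpl; lia |].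
    destruct (zs x (or_introl eq_refl)) as [_ Hx]. unfold poly_eval in Hx.
    simpl in Hx. lra.
  - destruct (Req_dec (a (S m)) 0) as [E | E].
    + apply at_most_zeros_ext with (g := poly_eval a m).
      { intros x _. change (poly_eval a m x + a (S m) * x ^ S m = poly_eval a m x).
        rewrite E. ring. }
      apply at_most_zeros_weaken with m; [lia |]. apply IH.
      exists i. split; [| exact Ha].
      destruct (Nat.eq_dec i (S m)) as [-> |]; [contradiction | lia].
    + apply (at_most_zeros_of_deriv I _ (poly_eval (deriv_coef a) m) m HI).
      { apply is_deriv_on_of_derive. intros x. apply poly_eval_is_derive. }
      apply IH. exists m. split; [lia |]. unfold deriv_coef.
      apply Rmult_integral_contrapositive_currified; [| exact E].
      apply not_0_INR. discriminate.
Qed.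

Theorem proposition1 (k l m n : nat) (I : R -> Prop) (F : R -> R) :
  is_interval I ->
  k_compatible k n l I F ->
  forall a b : nat -> R,
    let f := fun x => poly_eval a m x + F x * poly_eval b n x in
    (exists x, I x /\ f x <> 0) ->
    ((m < k)%nat -> at_most_zeros I f (k + l)) /\
    ((m < k)%nat ->
     (Z.of_nat l < Z.of_nat n - (Z.of_nat k - Z.of_nat m) + 2)%Z ->
     at_most_zeros I f (m + n + 1)).
Proof.
  intros HI [_ [Ft [_ [Ft_nonzero compat]]]] a b f [x0 [Ix0 fx0]].
  assert (bound : (m < k)%nat -> at_most_zeros I f (k + l)).
  { intros Hmk. destruct (classic (poly_nonzero b n)) as [Hb | Hb].
    - (* f^(k) = (F q)^(k) = Ft qt has at most l zeros; apply Rolle k times *)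
      destruct (compat b Hb) as [qt [Hd Hqt]].
      apply (at_most_zeros_of_deriv_n I k HI f _ l
               (is_deriv_n_on_plus I k _ _ _ _ (poly_eval_deriv_n_zero I m a k Hmk) Hd)).
      apply at_most_zeros_ext with (g := fun x => Ft x * qt x); [intros; ring |].
      now apply at_most_zeros_mult_nonvanishing.
    - (* q = 0, so f = p is a nonzero polynomial of degree at most m < k *)
      assert (Hf : forall x, f x = poly_eval a m x)
        by (intros x; unfold f; rewrite (poly_eval_not_nonzero b n x Hb); ring).
      apply at_most_zeros_ext with (g := poly_eval a m); [now intros |].
      apply at_most_zeros_weaken with m; [lia |].
      apply poly_eval_at_most_zeros; [exact HI |].
      apply NNPP. intros Ha. apply fx0. rewrite Hf. now apply poly_eval_not_nonzero. }
  split; [exact bound |].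
  intros Hmk Hl. apply at_most_zeros_weaken with (k + l)%nat; [lia | auto].
Qed.
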